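(* Let $p$ be a prime, $\alpha\in\mathbb{N}$, $r\in\mathbb{Z}$, and let $f(x)\in\mathbb{Z}_p[x]$ with $\deg f=l\in\mathbb{N}$. Then there is a sequence $(a_k)_{k\in\mathbb{N}}$ of $p$-adic integers such that for every $n\in\mathbb{N}$, $$\sum_{k=0}^n\binom nk(-1)^k\Big\lfloor\frac k{p^{\alpha-1}}\Big\rfloor!\binom{\{r\}_{p^{\alpha-1}}+\{k-r\}_{p^{\alpha-1}}}{\{r\}_{p^{\alpha-1}}}a_k=\begin{cases}p^lf\big(\frac{n-r}{p^{\alpha}}\big)&\text{if } n\equiv r\pmod{p^{\alpha}},\\ 0&\text{otherwise}.\end{cases}$$
   Context: For an integer $a$ and positive real $m$, $\{a\}_m$ is the unique number in $[0,m)$ with $a-\{a\}_m\in m\mathbb{Z}$ (so $\{a\}_{p^{-1}}=0$). When $\alpha=0$, $\lfloor k/p^{-1}\rfloor=pk$. $\mathbb{Z}_p$ denotes the $p$-adic integers. *)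

From mathcomp Require Import all_boot all_order all_algebra.
Set Implicit Arguments. Unset Strict Implicit. Unset Printing Implicit Defensive.
Import Order.TTheory GRing.Theory Num.Theory.
Local Open Scope ring_scope.

(* p-adic integers Z_p, modelled as coherent sequences of integers
   (x_m)_m with x_{m+1} = x_m (mod p^m); x represents lim x_m.
   Two such sequences denote the same p-adic integer iff x_m = y_m mod p^m
   for all m, so an identity in Z_p is stated as a congruence mod p^m
   for every precision m. *)
Record padic (p : nat) := Padic {
  pseq : nat -> int;
  pcoh : forall m : nat, (pseq m.+1 = pseq m %[mod (p ^ m)%N%:Z])%Z }.

Definition padic_is0 (p : nat) (x : padic p) : Prop :=
  forall m : nat, (pseq x m = 0 %[mod (p ^ m)%N%:Z])%Z.

(* floor(k / p^(alpha-1)), with the convention floor(k/p^{-1}) = p k *)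
Definition floorp (p alpha k : nat) : nat :=
  if alpha is a.+1 then (k %/ p ^ a)%N else (p * k)%N.

(* {a}_{p^(alpha-1)}, with the convention {a}_{p^{-1}} = 0 *)
Definition fracp (p alpha : nat) (a : int) : nat :=
  if alpha is a'.+1 then `|(a %% (p ^ a')%N%:Z)%Z|%N else 0%N.

Definition coefk (p alpha : nat) (r : int) (n k : nat) : int :=
  ('C(n, k))%:Z * (-1) ^+ k * ((floorp p alpha k)`!)%:Z
  * ('C(fracp p alpha r + fracp p alpha (k%:Z - r), fracp p alpha r))%:Z.

From mathcomp Require Import all_boot all_order all_algebra.
From mathcomp Require Import ring lra zify cyclic.
Set Implicit Arguments. Unset Strict Implicit. Unset Printing Implicit Defensive.
Import Order.TTheory GRing.Theory Num.Theory.
Local Open Scope ring_scope.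

(* Write g for the right-hand side.  Binomial inversion gives
   g(n) = \sum_k C(n,k) (-1)^k D_k g  with  D_k g = \sum_j C(k,j) (-1)^j g(j),
   so a_k = D_k g / c_k, where c_k is the factorial-binomial weight of the
   statement, is a p-adic integer as soon as p^(v_p c_k) divides D_k h for
   every part h(n) = p^l ((n - r) / p^alpha)^i of g.  For alpha = 0, h is a
   polynomial of degree i <= l, so D_k h vanishes for k > i and is divisible
   by p^l k! otherwise, while c_k = (p k)!.  For alpha > 0, h arises from a
   polynomial by alpha spreadings G |-> (n |-> [n = d mod p] G(n / p)).
   Expanding G in the binomial basis shows that each spreading raises a
   Legendre-type lower bound on v_p(D_k), and the final bound is exactly
   v_p(c_k).  The base case uses that the indicator of a residue class mod p
   is congruent mod p^e to a polynomial (Euler's theorem). *)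

Lemma PoszX (n m : nat) : (n ^ m)%N%:Z = n%:Z ^+ m.
Proof. by rewrite -!natz natrX. Qed.

Lemma absz_modz (x : int) (q : nat) : (0 < q)%N -> `|(x %% q)%Z|%N%:Z = (x %% q)%Z.
Proof. by move=> q_gt0; rewrite abszE ger0_norm // modz_ge0 // eqz_nat -lt0n. Qed.

Lemma modz_dvd_mod (x m d : int) : (d %| m)%Z -> (((x %% m)%Z %% d)%Z = (x %% d)%Z).
Proof.
move=> dvd_dm; apply/eqP; rewrite eqz_mod_dvd.
have -> : (x %% m)%Z - x = - (x %/ m)%Z * m by rewrite {2}(divz_eq x m); ring.
exact: dvdz_mull.
Qed.

Definition fdiff (g : nat -> int) (k : nat) : int :=
  \sum_(j < k.+1) 'C(k, j)%:Z * (-1) ^+ j * g j.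

Lemma sum_binS (h : nat -> int) n :
  \sum_(k < n.+2) 'C(n.+1, k)%:Z * h k =
  \sum_(k < n.+1) 'C(n, k)%:Z * h k + \sum_(k < n.+1) 'C(n, k)%:Z * h k.+1.
Proof.
rewrite big_ord_recl bin0 mul1r.
under eq_bigr => i _ do rewrite lift0 binS PoszD mulrDl.
rewrite big_split /= addrA; congr (_ + _).
rewrite [in RHS]big_ord_recl bin0 mul1r; congr (_ + _).
by rewrite big_ord_recr /= bin_small // mul0r addr0.
Qed.

Lemma eq_fdiff g h k :
  (forall n, (n <= k)%N -> g n = h n) -> fdiff g k = fdiff h k.
Proof. by move=> gh; apply: eq_bigr => i _; rewrite gh // -ltnS. Qed.

Lemma fdiffS g k : fdiff g k.+1 = fdiff g k - fdiff (fun j => g j.+1) k.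
Proof.
rewrite /fdiff; under eq_bigr => i _ do rewrite -mulrA.
rewrite (sum_binS (fun j => (-1) ^+ j * g j)) -sumrN.
by congr (_ + _); apply: eq_bigr => i _; rewrite ?exprS; ring.
Qed.

Lemma fdiffD g h k : fdiff (fun n => g n + h n) k = fdiff g k + fdiff h k.
Proof. by rewrite -big_split; apply: eq_bigr => i _; rewrite mulrDr. Qed.

Lemma fdiffZ c g k : fdiff (fun n => c * g n) k = c * fdiff g k.
Proof. by rewrite /fdiff mulr_sumr; apply: eq_bigr => i _; ring. Qed.

Lemma fdiff_sum K (F : 'I_K -> nat -> int) k :
  fdiff (fun n => \sum_(i < K) F i n) k = \sum_(i < K) fdiff (F i) k.
Proof.
rewrite /fdiff; under eq_bigr => j _ do rewrite mulr_sumr.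
exact: exchange_big.
Qed.

Lemma fdiff_congr g h k (M : int) :
  (forall n, (n <= k)%N -> (g n = h n %[mod M])%Z) ->
  (fdiff g k = fdiff h k %[mod M])%Z.
Proof.
move=> gh; apply/eqP; rewrite eqz_mod_dvd /fdiff -sumrB; apply: rpred_sum => i _.
by rewrite -mulrBr dvdz_mull // -eqz_mod_dvd; apply/eqP/gh; rewrite -ltnS.
Qed.

Lemma fdiff_inversion g n :
  \sum_(k < n.+1) 'C(n, k)%:Z * (-1) ^+ k * fdiff g k = g n.
Proof.
elim: n g => [|n IHn] g; first by rewrite big_ord1 /fdiff big_ord1 /= !mul1r.
under eq_bigr => i _ do rewrite -mulrA.
rewrite (sum_binS (fun k => (-1) ^+ k * fdiff g k)).
under eq_bigr => i _ do rewrite mulrA.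
under [X in _ + X]eq_bigr => i _ do
  rewrite fdiffS exprS mulN1r mulNr mulrBr opprB mulrBr !mulrA.
by rewrite IHn sumrB !IHn addrC subrK.
Qed.

Lemma fdiff_cst c k : fdiff (fun _ => c) k = c *+ (k == 0)%N.
Proof.
rewrite /fdiff -mulr_suml.
have := exprD1n (-1 : int) k; rewrite addNr.
under eq_bigr => i _ do rewrite -mulr_natr mulrC natz.
case: k => [|k] <-; first by rewrite expr0 mul1r.
by rewrite expr0n mul0r.
Qed.

Lemma fdiff_mulnat h k :
  fdiff (fun j => j%:Z * h j) k.+1 = - k.+1%:Z * fdiff (fun j => h j.+1) k.
Proof.
rewrite /fdiff big_ord_recl /= mul0r mulr0 add0r mulr_sumr.
apply: eq_bigr => i _; rewrite /bump /= add1n.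
have binE : 'C(k.+1, i.+1)%:Z * i.+1%:Z = k.+1%:Z * 'C(k, i)%:Z.
  by rewrite -!PoszM mulnC -mul_bin_diag.
rewrite exprS.
transitivity (- ('C(k.+1, i.+1)%:Z * i.+1%:Z) * (-1) ^+ i * h i.+1); first by ring.
by rewrite binE; ring.
Qed.

Lemma fdiff_powS (a : int) N k :
  fdiff (fun j => (a + j%:Z) ^+ N.+1) k.+1 =
  a * fdiff (fun j => (a + j%:Z) ^+ N) k.+1
  - k.+1%:Z * fdiff (fun j => (a + 1 + j%:Z) ^+ N) k.
Proof.
under eq_fdiff => j _ do rewrite exprS mulrDl.
rewrite fdiffD fdiffZ fdiff_mulnat mulNr.
by congr (_ - _ * _); apply: eq_fdiff => j _; rewrite -addn1 PoszD addrA addrAC.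
Qed.

Lemma fact_dvd_fdiff_pow (a : int) N k :
  (k`!%:Z %| fdiff (fun j => (a + j%:Z) ^+ N) k)%Z.
Proof.
elim: N a k => [|N IHN] a [|k]; rewrite ?fact0 ?dvd1z //.
  by under eq_fdiff => j _ do rewrite expr0; rewrite fdiff_cst.
rewrite fdiff_powS; apply: rpredB; first exact: dvdz_mull.
by rewrite factS PoszM; apply: dvdz_mul.
Qed.

Lemma fdiff_pow_small (a : int) N k :
  (N < k)%N -> fdiff (fun j => (a + j%:Z) ^+ N) k = 0.
Proof.
elim: N a k => [|N IHN] a [|k] //.
  by under eq_fdiff => j _ do rewrite expr0; rewrite fdiff_cst.
by rewrite ltnS => ltNk; rewrite fdiff_powS !IHN ?mulr0 ?subr0 // ltnW.
Qed.

Lemma fdiff_poly (G : {poly int}) k :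
  fdiff (fun n => G.[n%:Z]) k =
  \sum_(i < size G) G`_i * fdiff (fun j => (0 + j%:Z) ^+ i) k.
Proof.
under eq_fdiff => n _ do rewrite horner_coef.
rewrite fdiff_sum; apply: eq_bigr => i _.
by rewrite -fdiffZ; apply: eq_fdiff => n _; rewrite add0r.
Qed.

Lemma fact_dvd_fdiff_poly (G : {poly int}) k :
  (k`!%:Z %| fdiff (fun n => G.[n%:Z]) k)%Z.
Proof.
by rewrite fdiff_poly rpred_sum // => i _; rewrite dvdz_mull ?fact_dvd_fdiff_pow.
Qed.

Lemma fdiff_poly_small (G : {poly int}) k :
  (size G <= k)%N -> fdiff (fun n => G.[n%:Z]) k = 0.
Proof.
move=> szG; rewrite fdiff_poly big1 // => i _.
by rewrite fdiff_pow_small ?mulr0 // (leq_trans (ltn_ord i)).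
Qed.

Lemma modn_mul_digits n q1 q2 :
  (n %% (q1 * q2) = n %% q1 + q1 * (n %/ q1 %% q2))%N.
Proof.
rewrite [(q1 * q2)%N]mulnC modn_divl -(modn_dvdm n (dvdn_mull q2 (dvdnn q1))).
by set m := (n %% _)%N; rewrite addnC mulnC -divn_eq.
Qed.

Lemma eq_digits q r1 r2 x y : (r1 < q)%N -> (r2 < q)%N ->
  (r1 + q * x == r2 + q * y)%N = (r1 == r2) && (x == y).
Proof.
move=> lt_r1 lt_r2; apply/eqP/andP => [eq_xy|[/eqP-> /eqP->]] //.
have q_gt0 : (0 < q)%N := leq_ltn_trans (leq0n r1) lt_r1.
rewrite ![(q * _)%N]mulnC ![(r1 + _)%N]addnC [(r2 + _)%N]addnC in eq_xy.
have := congr1 (divn^~ q) eq_xy; have := congr1 (modn^~ q) eq_xy.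
rewrite /= !modnMDl !modn_small // => ->.
by rewrite !divnMDl // !divn_small // !addn0 => ->.
Qed.

Definition spread (q r : nat) (G : nat -> int) (n : nat) : int :=
  if (n %% q == r)%N then G (n %/ q)%N else 0.

Lemma spread_mul q1 q2 r G n : (r < q1 * q2)%N ->
  spread (q1 * q2) r G n = spread q1 (r %% q1) (spread q2 (r %/ q1) G) n.
Proof.
move=> lt_r; have q1_gt0 : (0 < q1)%N by case: q1 lt_r.
rewrite /spread modn_mul_digits -{1}(modn_small lt_r) modn_mul_digits.
rewrite eq_digits ?ltn_mod // (modn_small (_ : r %/ q1 < q2)%N); last first.
  by rewrite ltn_divLR // mulnC.
by case: eqP => //= _; rewrite divnMA.
Qed.

Lemma fdiff_spread q d G k :
  fdiff (spread q d G) k =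
  \sum_(j < k.+1) (-1) ^+ j * fdiff G j * fdiff (spread q d (fun m => 'C(m, j)%:Z)) k.
Proof.
under eq_bigr => j _ do rewrite -fdiffZ.
rewrite -fdiff_sum; apply: eq_fdiff => n le_nk; rewrite /spread.
case: ifP => _; last by rewrite big1 // => j _; rewrite mulr0.
rewrite -{1}(fdiff_inversion G (n %/ q)).
pose F j := 'C(n %/ q, j)%:Z * (-1) ^+ j * fdiff G j.
rewrite (big_ord_widen k.+1 F); last first.
  by rewrite ltnS (leq_trans (leq_div n q)).
rewrite big_mkcond; apply: eq_bigr => j _; rewrite /F.
by case: ltnP => [_|le_j]; [ring | rewrite bin_small // mulr0].
Qed.

Lemma fdiff_spread_bin_small q d j k : (k < q * j + d)%N ->
  fdiff (spread q d (fun m => 'C(m, j)%:Z)) k = 0.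
Proof.
move=> lt_k; rewrite /fdiff big1 // => n _; rewrite /spread.
case: eqP => [nd|_]; last by rewrite mulr0.
have : (q * (n %/ q) < q * j)%N.
  by move: (ltn_ord n) (divn_eq n q); rewrite nd; lia.
by rewrite ltn_mul2l => /andP[_ lt_nj]; rewrite (bin_small lt_nj) mulr0.
Qed.

Section PrimeModulus.

Variable p : nat.
Hypothesis p_pr : prime p.

Let p_gt0 : (0 < p)%N. Proof. exact: prime_gt0. Qed.

Lemma leq_totient_pfactor e : (e <= totient (p ^ e))%N.
Proof.
case: e => // e; rewrite totient_pfactor //= -ltnS.
apply: leq_trans (ltn_expl e (prime_gt1 p_pr)) _.
by rewrite leq_pmull // -subn1 subn_gt0 prime_gt1.
Qed.

Lemma residue_indicator_poly d e : (d < p)%N ->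
  exists H : {poly int}, forall n : nat,
    ((if (n %% p == d)%N then 1 else 0) = H.[n%:Z] %[mod (p ^ e)%N%:Z])%Z.
Proof.
move=> ltdp; set N := totient (p ^ e).
(* If n = d mod p then p^e | p^N | (n + p - d)^N, else (n + p - d)^N = 1 mod p^e. *)
exists (1 - ('X + (p - d)%N%:Z%:P) ^+ N) => n.
rewrite !hornerE -PoszD -PoszX; set y := (n + (p - d))%N.
have p_dvd_y : (p %| y)%N = (n %% p == d)%N.
  rewrite /dvdn /y -modnDml; have := ltn_mod n p; rewrite p_gt0.
  case: (ltngtP (n %% p) d) => [lt_nd|lt_dn|->] lt_np.
  - by rewrite modn_small; [apply/eqP; lia | lia].
  - have -> : (n %% p + (p - d) = (n %% p - d) + p)%N by lia.
    by rewrite modnDr modn_small; [apply/eqP; lia | lia].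
  - by rewrite subnKC ?modnn ?eqxx // ltnW.
case: ifP => y_mod; rewrite -p_dvd_y in y_mod; apply/eqP; rewrite eqz_mod_dvd.
  have -> : 1 - (1 - (y ^ N)%N%:Z) = (y ^ N)%N%:Z by ring.
  rewrite dvdzE /=; apply: dvdn_trans (dvdn_exp2l p (leq_totient_pfactor e)) _.
  exact: dvdn_exp2r.
have cop_y : coprime y (p ^ e) by rewrite coprime_sym coprimeXl // prime_coprime ?y_mod.
have y_gt0 : (0 < y)%N by rewrite lt0n; apply: contraFN y_mod => /eqP->; exact: dvdn0.
have := Euler_exp_totient cop_y; rewrite -/N => /eqP.
rewrite eqn_mod_dvd ?expn_gt0 ?y_gt0 // => dvd_pe.
by rewrite sub0r opprB -[1]/(1%N%:Z) subzn ?expn_gt0 ?y_gt0.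
Qed.

Lemma fdiff_residue_poly d (G : {poly int}) k : (d < p)%N ->
  ((p ^ logn p k`!)%N%:Z %|
     fdiff (fun n => if (n %% p == d)%N then G.[n%:Z] else 0) k)%Z.
Proof.
move=> ltdp; have [H HE] := residue_indicator_poly (logn p k`!) ltdp.
apply/dvdz_mod0P; rewrite (@fdiff_congr _ (fun n => (G * H).[n%:Z])) => [|n _].
  apply/dvdz_mod0P/(dvdz_trans _ (fact_dvd_fdiff_poly _ _)).
  by rewrite dvdzE /= pfactor_dvdnn.
rewrite hornerM -modzMmr -HE modzMmr.
by case: ifP; rewrite ?mulr1 ?mulr0.
Qed.

Lemma sum_div_exp_widen n M : (n < M)%N ->
  (\sum_(1 <= i < M) n %/ p ^ i = \sum_(1 <= i < n.+1) n %/ p ^ i)%N.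
Proof.
move=> lt_nM; rewrite (big_cat_nat _ (n := n.+1)) //= [X in (_ + X)%N]big1_seq ?addn0 //.
move=> i /andP[_]; rewrite mem_index_iota => /andP[le_ni _].
rewrite divn_small //; apply: leq_trans (ltn_expl n (prime_gt1 p_pr)) _.
by rewrite leq_exp2l ?prime_gt1 // ltnW.
Qed.

Lemma logn_fact_div n : logn p n`! = (n %/ p + logn p (n %/ p)`!)%N.
Proof.
rewrite !logn_fact // -(sum_div_exp_widen (M := n.+2)) //.
rewrite -(sum_div_exp_widen (n := n %/ p) (M := n.+1)) ?ltnS ?leq_div //.
rewrite big_nat_recl // expn1; congr (_ + _)%N.
by apply: eq_bigr => i _; rewrite expnS divnMA.
Qed.

Fixpoint legendre (b : nat) (x : int) : int :=
  if b is b'.+1 then (x %/ p)%Z + legendre b' (x %/ p)%Z else 0.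

Lemma legendre_le b x y : x <= y -> legendre b x <= legendre b y.
Proof.
have divz_le u v : u <= v -> (u %/ p)%Z <= (v %/ p)%Z.
  move=> le_uv; rewrite lez_divRL ?ltz_nat //; apply: le_trans le_uv.
  by apply: lez_floor; rewrite eqz_nat -lt0n.
elim: b x y => [|b IHb] x y le_xy //=.
by rewrite lerD ?IHb ?divz_le.
Qed.

Lemma logn_fact_legendre b x :
  (logn p x`!)%:Z = legendre b x%:Z + (logn p (x %/ p ^ b)`!)%:Z.
Proof.
elim: b x => [|b IHb] x; first by rewrite /= expn0 divn1 add0r.
by rewrite logn_fact_div PoszD IHb /= divz_nat -divnMA -expnS addrA.
Qed.

Lemma legendre_shift b : exists c : int,
  forall x t, legendre b (x + (p ^ b)%N%:Z * t) = legendre b x + t * c.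
Proof.
elim: b => [|b [c IHb]]; first by exists 0 => x t; rewrite /= mulr0 addr0.
exists ((p ^ b)%N%:Z + c) => x t /=.
have -> : x + (p ^ b.+1)%N%:Z * t = ((p ^ b)%N%:Z * t) * p%:Z + x.
  by rewrite expnS PoszM; ring.
by rewrite divzMDl ?eqz_nat -?lt0n // [X in legendre _ X]addrC IHb; ring.
Qed.

Definition vbound (b s k : nat) : int :=
  (logn p k`!)%:Z - (logn p s`!)%:Z - legendre b (k%:Z - s%:Z).

Lemma vbound_digit b s d j k : (d < p)%N -> (p * j + d <= k)%N ->
  vbound b.+1 (d + p * s) k <=
  vbound b s j + (logn p k`!)%:Z - j%:Z - (logn p j`!)%:Z.
Proof.
move=> ltdp le_jk; rewrite /vbound /=.
have -> : logn p (d + p * s)`! = (s + logn p s`!)%N.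
  by rewrite logn_fact_div mulnC divnDMl // divn_small.
set K := ((k%:Z - d%:Z) %/ p)%Z.
have -> : ((k%:Z - (d + p * s)%N%:Z) %/ p)%Z = K - s%:Z.
  rewrite /K PoszD PoszM.
  have -> : k%:Z - (d%:Z + p%:Z * s%:Z) = (- s%:Z) * p%:Z + (k%:Z - d%:Z) by ring.
  by rewrite divzMDl ?eqz_nat -?lt0n // addrC.
have le_jK : j%:Z <= K by rewrite /K lez_divRL ?ltz_nat //; nia.
have := legendre_le b (lerB le_jK (lexx s%:Z)).
rewrite PoszD; lra.
Qed.

Definition pval_ge (x X : int) : Prop :=
  forall t : nat, t%:Z <= X -> ((p ^ t)%N%:Z %| x)%Z.

Lemma pval_geM x y X Y : pval_ge x X -> pval_ge y Y -> pval_ge (x * y) (X + Y).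
Proof.
move=> px py t le_t.
case: X px le_t => X px le_t; last first.
  by rewrite dvdz_mull ?py //; rewrite NegzE in le_t; lia.
case: Y py le_t => Y py le_t; last first.
  by rewrite dvdz_mulr ?px //; rewrite NegzE in le_t; lia.
rewrite -(subnKC (geq_minl t X)) expnD PoszM.
by apply: dvdz_mul; [apply: px | apply: py]; lia.
Qed.

Lemma pval_ge_cancel_fact a j x :
  ((p ^ a)%N%:Z %| (p ^ j * j`!)%N%:Z * x)%Z ->
  pval_ge x (a%:Z - j%:Z - (logn p j`!)%:Z).
Proof.
move=> dvd_a t le_t; have [m cop_m fact_j] := pfactor_coprime p_pr (fact_gt0 j).
set v := (j + logn p j`!)%N.
have fact_pj : (p ^ j * j`!)%N = (p ^ v * m)%N.
  by rewrite /v expnD {1}fact_j mulnCA mulnC.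
have : ((p ^ v)%N%:Z * (p ^ t)%N%:Z %| (p ^ v)%N%:Z * (m%:Z * x))%Z.
  apply: (@dvdz_trans (p ^ a)%N%:Z).
    by rewrite -PoszM -expnD dvdzE /= dvdn_exp2l //; lia.
  by rewrite mulrA -PoszM -fact_pj.
rewrite dvdz_mul2l ?eqz_nat -?lt0n ?expn_gt0 ?p_gt0 // Gauss_dvdzr //.
by rewrite coprimezE /= coprimeXl.
Qed.

Definition fdiff_bounded (b s : nat) (g : nat -> int) : Prop :=
  forall k, pval_ge (fdiff g k) (vbound b s k).

Lemma pfactor_fact_bin_prod d n j : (n %% p == d)%N ->
  (p ^ j * j`! * 'C(n %/ p, j))%N%:Z = \prod_(i < j) (n%:Z - (d + p * i)%N%:Z).
Proof.
move=> /eqP nd; have en : n = (n %/ p * p + d)%N by rewrite -nd -divn_eq.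
rewrite -mulnA [(j`! * _)%N]mulnC bin_ffact.
elim: j => [|j IHj]; first by rewrite big_ord0 ffactn0 expn0.
rewrite big_ord_recr /= -IHj ffactnSr expnS.
case: (leqP j (n %/ p)) => [le_j|lt_j]; last by rewrite ffact_small // !muln0 mul0r.
rewrite !PoszM -subzn // [in X in _ = _ * X]en !PoszD !PoszM; ring.
Qed.

Lemma fdiff_spread_bin_dvd d j k : (d < p)%N ->
  ((p ^ logn p k`!)%N%:Z %|
     (p ^ j * j`!)%N%:Z * fdiff (spread p d (fun m => 'C(m, j)%:Z)) k)%Z.
Proof.
move=> ltdp; rewrite -fdiffZ.
have := fdiff_residue_poly (\prod_(i < j) ('X - (d + p * i)%N%:Z%:P)) k ltdp.
congr (_ %| _)%Z; apply: eq_fdiff => n _; rewrite /spread.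
case: ifP => nd; last by rewrite mulr0.
rewrite -PoszM (pfactor_fact_bin_prod j nd) horner_prod; apply: eq_bigr => i _.
by rewrite hornerD hornerN hornerX hornerC.
Qed.

Lemma fdiff_bounded_spread b s d G : (d < p)%N ->
  fdiff_bounded b s G -> fdiff_bounded b.+1 (d + p * s) (spread p d G).
Proof.
move=> ltdp bG k t le_t; rewrite fdiff_spread; apply: rpred_sum => j _.
case: (ltnP k (p * j + d)) => [lt_k|le_k].
  by rewrite fdiff_spread_bin_small // mulr0 dvdz0.
have bin_bound := pval_ge_cancel_fact (fdiff_spread_bin_dvd j k ltdp).
rewrite -mulrA; apply/dvdz_mull/(pval_geM (bG j) bin_bound).
by apply: le_trans le_t _; apply: le_trans (vbound_digit b s ltdp le_k) _; lra.
Qed.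

Lemma fdiff_bounded0_spread_pow l i (M : int) r : (i <= l)%N -> (r < p)%N ->
  fdiff_bounded 0 0 (spread p r (fun m => (p ^ l)%N%:Z * (m%:Z + M) ^+ i)).
Proof.
move=> le_il ltrp k t; rewrite /vbound /= fact0 logn1 !subr0 => le_t.
pose G := (p ^ (l - i))%N%:Z%:P * ('X + (p%:Z * M - r%:Z)%:P) ^+ i.
apply: (@dvdz_trans (p ^ logn p k`!)%N%:Z); first by rewrite dvdzE /= dvdn_exp2l; lia.
have := fdiff_residue_poly G k ltrp.
congr (_ %| _)%Z; apply: eq_fdiff => n _; rewrite /spread.
case: eqP => // nr; rewrite /G hornerM hornerC horner_exp hornerD hornerX hornerC.
have -> : (p ^ l)%N = (p ^ (l - i) * p ^ i)%N by rewrite -expnD subnK.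
rewrite PoszM [(p ^ i)%N%:Z]PoszX -mulrA -exprMn; congr (_ * (_ ^+ _)).
by rewrite {1}(divn_eq n p) nr PoszD PoszM; ring.
Qed.

Lemma fdiff_bounded_spread_pow l i (M : int) b r : (i <= l)%N -> (r < p ^ b.+1)%N ->
  fdiff_bounded b (r %% p ^ b)
    (spread (p ^ b.+1) r (fun m => (p ^ l)%N%:Z * (m%:Z + M) ^+ i)).
Proof.
move=> le_il; set P := fun m : nat => _; elim: b r => [|b IHb] r lt_r.
  by rewrite expn0 modn1; apply: fdiff_bounded0_spread_pow; rewrite // -(expn1 p).
have lt_rp : (r %/ p < p ^ b.+1)%N by rewrite ltn_divLR // -expnSr.
have -> : (r %% p ^ b.+1 = r %% p + p * (r %/ p %% p ^ b))%N.
  by rewrite expnS modn_mul_digits.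
move=> k; rewrite (@eq_fdiff _ (spread p (r %% p) (spread (p ^ b.+1) (r %/ p) P))).
  by apply: fdiff_bounded_spread (IHb _ lt_rp) k; rewrite ltn_mod.
by move=> n _; rewrite [(p ^ b.+2)%N]expnS spread_mul -?expnS.
Qed.

Lemma logn_bin m n :
  (logn p 'C(m + n, m))%:Z =
  (logn p (m + n)`!)%:Z - (logn p m`!)%:Z - (logn p n`!)%:Z.
Proof.
have := bin_fact (leq_addr n m); rewrite addKn => fact_mn.
rewrite -fact_mn !lognM ?muln_gt0 ?fact_gt0 ?bin_gt0 ?leq_addr // !PoszD; ring.
Qed.

Definition cfact (alpha : nat) (r : int) (k : nat) : nat :=
  ((floorp p alpha k)`! *
   'C(fracp p alpha r + fracp p alpha (k%:Z - r), fracp p alpha r))%N.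

Lemma logn_cfact b r k : (logn p (cfact b.+1 r k))%:Z = vbound b (fracp p b.+1 r) k.
Proof.
rewrite /cfact /vbound /floorp /fracp; set q := (p ^ b)%N.
have q_gt0 : (0 < q)%N by rewrite expn_gt0 p_gt0.
set rho := `|(r %% q)%Z|%N; set s := `|((k%:Z - r) %% q)%Z|%N.
have rhoE : rho%:Z = (r %% q)%Z by rewrite absz_modz.
have sE : s%:Z = ((k%:Z - r) %% q)%Z by rewrite absz_modz.
have lt_rho : (rho < q)%N by rewrite -ltz_nat rhoE ltz_pmod ?ltz_nat.
have lt_s : (s < q)%N by rewrite -ltz_nat sE ltz_pmod ?ltz_nat.
set t := ((k%:Z - rho%:Z) %/ q)%Z.
have k_rhoE : k%:Z - rho%:Z = s%:Z + q%:Z * t.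
  rewrite {1}(divz_eq (k%:Z - rho%:Z) q) -/t sE rhoE.
  by rewrite -modzDmr modzNm modzDmr addrC mulrC.
have kE : k%:Z = (rho + s)%N%:Z + q%:Z * t by rewrite PoszD -addrA -k_rhoE; ring.
have [c legendre_qt] := legendre_shift b.
have Lk := legendre_qt (rho + s)%N%:Z t; rewrite -kE in Lk.
have Lk_rho := legendre_qt s%:Z t; rewrite -k_rhoE in Lk_rho.
have Vk := logn_fact_legendre b k.
have Vs := logn_fact_legendre b s.
rewrite -/q divn_small // fact0 logn1 addr0 in Vs.
have Vrho_s := logn_fact_legendre b (rho + s); rewrite -/q in Vrho_s Vk.
have : ((rho + s) %/ q < 2)%N by rewrite ltn_divLR //; lia.
case: ((rho + s) %/ q)%N Vrho_s => [|[|]] // Vrho_s _;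
  rewrite ?fact0 logn1 addr0 in Vrho_s;
  rewrite lognM ?fact_gt0 ?bin_gt0 ?leq_addr // PoszD logn_bin; lra.
Qed.

Definition rhs_term (alpha : nat) (r : int) (l i n : nat) : int :=
  if ((p ^ alpha)%N%:Z %| n%:Z - r)%Z
  then (p ^ l)%N%:Z * ((n%:Z - r) %/ (p ^ alpha)%N%:Z)%Z ^+ i else 0.

Lemma rhs_termS_spread b r l i n :
  let Q := (p ^ b.+1)%N in
  rhs_term b.+1 r l i n =
  spread Q `|(r %% Q)%Z|%N (fun m => (p ^ l)%N%:Z * (m%:Z - (r %/ Q)%Z) ^+ i) n.
Proof.
move=> Q; have Q_gt0 : (0 < Q)%N by rewrite expn_gt0 p_gt0.
rewrite /rhs_term /spread -/Q.
have -> : (Q%:Z %| n%:Z - r)%Z = (n %% Q == `|(r %% Q)%Z|)%N.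
  by rewrite -eqz_mod_dvd modz_nat -eqz_nat absz_modz.
case: eqP => // nQ; congr (_ * _ ^+ _).
have -> : n%:Z - r = ((n %/ Q)%N%:Z - (r %/ Q)%Z) * Q%:Z.
  rewrite {1}(divn_eq n Q) nQ PoszD PoszM absz_modz //.
  set R := (r %% Q)%Z; set D := (r %/ Q)%Z.
  have -> : r = D * Q%:Z + R by rewrite /D /R -divz_eq.
  ring.
by rewrite mulzK // eqz_nat -lt0n.
Qed.

Lemma cfact_dvd_fdiff_rhs_term alpha r l i k : (i <= l)%N ->
  ((p ^ logn p (cfact alpha r k))%N%:Z %| fdiff (rhs_term alpha r l i) k)%Z.
Proof.
move=> le_il; case: alpha => [|b].
  rewrite /cfact /= bin0 muln1 logn_fact_div mulKn // expnD PoszM.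
  pose G : {poly int} := ('X - r%:P) ^+ i.
  rewrite (@eq_fdiff _ (fun n => (p ^ l)%N%:Z * G.[n%:Z])) => [|n _]; last first.
    by rewrite /rhs_term expn0 dvd1z divz1 /G horner_exp hornerD hornerN hornerX hornerC.
  rewrite fdiffZ; case: (ltnP i k) => [lt_ik|le_ki].
    by rewrite fdiff_poly_small ?mulr0 ?dvdz0 // /G size_exp_XsubC.
  apply: dvdz_mul; first by rewrite dvdzE /= dvdn_exp2l // (leq_trans le_ki).
  by apply: (@dvdz_trans k`!%:Z); rewrite ?fact_dvd_fdiff_poly // dvdzE /= pfactor_dvdnn.
set Q := (p ^ b.+1)%N; have Q_gt0 : (0 < Q)%N by rewrite expn_gt0 p_gt0.
set rb := `|(r %% Q)%Z|%N; have rbE : rb%:Z = (r %% Q)%Z by rewrite absz_modz.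
have lt_rb : (rb < Q)%N by rewrite -ltz_nat rbE ltz_pmod ?ltz_nat.
have rb_frac : (rb %% p ^ b)%N = fracp p b.+1 r.
  apply/eqP; rewrite -eqz_nat -modz_nat rbE /fracp absz_modz ?expn_gt0 ?p_gt0 //.
  by rewrite modz_dvd_mod // dvdzE /= dvdn_exp2l.
pose P m := (p ^ l)%N%:Z * (m%:Z - (r %/ Q)%Z) ^+ i.
rewrite (@eq_fdiff _ (spread Q rb P)) => [|n _]; last exact: rhs_termS_spread.
apply: (fdiff_bounded_spread_pow (- (r %/ Q)%Z) le_il lt_rb).
by rewrite rb_frac -logn_cfact.
Qed.

Lemma cfact_gt0 alpha r k : (0 < cfact alpha r k)%N.
Proof. by rewrite muln_gt0 fact_gt0 bin_gt0 leq_addr. Qed.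

Lemma coefkE alpha r n k :
  coefk p alpha r n k = 'C(n, k)%:Z * (-1) ^+ k * (cfact alpha r k)%:Z.
Proof. by rewrite /coefk /cfact PoszM mulrA. Qed.

Lemma sum_rhs_term alpha r l K (x : 'I_K -> int) n :
  \sum_(i < K) x i * rhs_term alpha r l i n =
  if ((p ^ alpha)%N%:Z %| n%:Z - r)%Z
  then (p ^ l)%N%:Z * \sum_(i < K) x i * ((n%:Z - r) %/ (p ^ alpha)%N%:Z)%Z ^+ i
  else 0.
Proof.
rewrite /rhs_term; case: ifP => _; last by rewrite big1 // => i _; rewrite mulr0.
by rewrite mulr_sumr; apply: eq_bigr => i _; ring.
Qed.

Lemma padic_lincomb_coh K (f : 'I_K -> padic p) (e : 'I_K -> int) m :
  (\sum_(i < K) pseq (f i) m.+1 * e i =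
   \sum_(i < K) pseq (f i) m * e i %[mod (p ^ m)%N%:Z])%Z.
Proof.
apply/eqP; rewrite eqz_mod_dvd -sumrB rpred_sum // => i _.
by rewrite -mulrBl dvdz_mulr // -eqz_mod_dvd; apply/eqP/pcoh.
Qed.

Definition padic_lincomb K (f : 'I_K -> padic p) (e : 'I_K -> int) : padic p :=
  @Padic p (fun m => \sum_(i < K) pseq (f i) m * e i) (padic_lincomb_coh f e).

Definition inv_modp (m u : nat) : nat := (u ^ (totient (p ^ m)).-1)%N.

Lemma mul_inv_modp m u : coprime p u ->
  ((u * inv_modp m u)%N%:Z = 1 %[mod (p ^ m)%N%:Z])%Z.
Proof.
move=> cop_u; have cop_um : coprime u (p ^ m) by rewrite coprime_sym coprimeXl.
rewrite /inv_modp -expnS prednK ?totient_gt0 ?expn_gt0 ?p_gt0 //.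
by rewrite -[1]/(1%N%:Z) !modz_nat (Euler_exp_totient cop_um).
Qed.

Lemma padic_divn_coh (x : padic p) u (cop_u : coprime p u) m :
  (pseq x m.+1 * (inv_modp m.+1 u)%:Z =
   pseq x m * (inv_modp m u)%:Z %[mod (p ^ m)%N%:Z])%Z.
Proof.
have inv_coh : ((inv_modp m.+1 u)%:Z = (inv_modp m u)%:Z %[mod (p ^ m)%N%:Z])%Z.
  apply/eqP; rewrite eqz_mod_dvd -(Gauss_dvdzr _ (_ : coprimez _ u%:Z)); last first.
    by rewrite coprimezE /= coprime_sym coprimeXr // coprime_sym.
  have -> : u%:Z * ((inv_modp m.+1 u)%:Z - (inv_modp m u)%:Z) =
    ((u * inv_modp m.+1 u)%N%:Z - 1) - ((u * inv_modp m u)%N%:Z - 1).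
    by rewrite !PoszM; ring.
  apply: rpredB; rewrite -eqz_mod_dvd ?mul_inv_modp //.
  have /eqP := mul_inv_modp m.+1 cop_u; rewrite !eqz_mod_dvd; apply: dvdz_trans.
  by rewrite dvdzE /= dvdn_exp2l.
by rewrite -modzMml (pcoh x m) modzMml -modzMmr inv_coh modzMmr.
Qed.

Definition padic_divn (x : padic p) u (cop_u : coprime p u) : padic p :=
  @Padic p (fun m => pseq x m * (inv_modp m u)%:Z) (padic_divn_coh x cop_u).

Lemma padic_binomial_inversion K (f : 'I_K -> padic p) (h : 'I_K -> nat -> int)
    (c : nat -> nat) :
  (forall k, 0 < c k)%N ->
  (forall i k, ((p ^ logn p (c k))%N%:Z %| fdiff (h i) k)%Z) ->
  exists a : nat -> padic p, forall n m : nat,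
    (\sum_(k < n.+1) 'C(n, k)%:Z * (-1) ^+ k * (c k)%:Z * pseq (a k) m
     = \sum_(i < K) pseq (f i) m * h i n %[mod (p ^ m)%N%:Z])%Z.
Proof.
move=> c_gt0 dvd_c; pose v k := logn p (c k).
have c_split k : c k = (p ^ v k * (c k)`_p^')%N by rewrite -p_part partnC.
have cop_u k : coprime p (c k)`_p^' by rewrite prime_coprime // -p'natE // part_pnat.
pose A k := padic_lincomb f (fun i => (fdiff (h i) k %/ (p ^ v k)%N%:Z)%Z).
exists (fun k => padic_divn (A k) (cop_u k)) => n m.
rewrite -(fdiff_inversion (fun n => \sum_(i < K) pseq (f i) m * h i n)).
apply/eqP; rewrite eqz_mod_dvd -sumrB rpred_sum // => k _ /=.
rewrite fdiff_sum; set S := \sum_(i < K) pseq (f i) m * _.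
have -> : \sum_(i < K) fdiff (fun n => pseq (f i) m * h i n) k = S * (p ^ v k)%N%:Z.
  rewrite mulr_suml; apply: eq_bigr => i _.
  by rewrite fdiffZ -{1}(divzK (dvd_c i k)) mulrA.
rewrite {1}c_split PoszM; set u := ((c k)`_p^')%N; set w := (inv_modp m u)%:Z.
have -> : 'C(n, k)%:Z * (-1) ^+ k * ((p ^ v k)%N%:Z * u%:Z) * (S * w) -
    'C(n, k)%:Z * (-1) ^+ k * (S * (p ^ v k)%N%:Z) =
    'C(n, k)%:Z * (-1) ^+ k * (p ^ v k)%N%:Z * S * (u%:Z * w - 1) by ring.
by rewrite dvdz_mull // -PoszM -eqz_mod_dvd; apply/eqP/mul_inv_modp/cop_u.
Qed.

End PrimeModulus.

Theorem theorem1p4 (p alpha : nat) (r : int) (l : nat)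
    (f : 'I_l.+1 -> padic p) :
  prime p -> ~ padic_is0 (f ord_max) ->
  exists a : nat -> padic p,
    forall n m : nat,
      (\sum_(0 <= k < n.+1) coefk p alpha r n k * pseq (a k) m
       = (if ((p ^ alpha)%N%:Z %| n%:Z - r)%Z
          then (p ^ l)%N%:Z *
               \sum_(i < l.+1) pseq (f i) m
                               * ((n%:Z - r) %/ (p ^ alpha)%N%:Z)%Z ^+ i
          else 0) %[mod (p ^ m)%N%:Z])%Z.
Proof.
move=> p_pr _.
have [a a_spec] := padic_binomial_inversion p_pr f (cfact_gt0 p alpha r)
  (fun i k => cfact_dvd_fdiff_rhs_term p_pr alpha r k (leq_ord i)).
exists a => n m; rewrite -sum_rhs_term big_mkord.
under eq_bigr => k _ do rewrite coefkE.
exact: a_spec.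
Qed.
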